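(* For every prime power $q$ there exists an $[n,2]_q$ MWS code with $n=\frac{q(q+1)}{2}=\left\lceil\frac{q\,\theta_q(1)}{2}\right\rceil$; hence the lower bound $n\ge\lceil q\theta_q(k-1)/2\rceil$ for $[n,k]_q$ MWS codes with $k\ge2$ is attained when $k=2$.
   Context: An $[n,k]_q$ code is a $k$-dimensional subspace of $\mathbb{F}_q^n$, non-degenerate (no coordinate identically zero on the code). $\theta_q(m)=\frac{q^{m+1}-1}{q-1}$, so $\theta_q(1)=q+1$. The code is MWS if the set of its non-zero Hamming weights has cardinality $\theta_q(k-1)$. *)

From HB Require Import structures.
From mathcomp Require Import all_boot all_order all_algebra all_field.
Set Implicit Arguments. Unset Strict Implicit. Unset Printing Implicit Defensive.
Import GRing.Theory.
Local Open Scope ring_scope.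

Definition wt (F : finFieldType) (n : nat) (v : 'rV[F]_n) : nat :=
  #|[set i : 'I_n | v 0 i != 0]|.

Definition nondegenerate (F : finFieldType) (n : nat) (C : {vspace 'rV[F]_n}) :=
  forall i : 'I_n, exists2 v, v \in C & v 0 i != 0.

Definition is_code (F : finFieldType) (n k : nat) (C : {vspace 'rV[F]_n}) :=
  \dim C = k /\ nondegenerate C.

Definition nonzero_weights (F : finFieldType) (n : nat) (C : {vspace 'rV[F]_n})
  : seq nat :=
  undup [seq wt v | v <- enum 'rV[F]_n & (v \in C) && (v != 0)].

Definition theta (q m : nat) : nat := (q ^ m.+1 - 1) %/ (q - 1).

Definition MWS (F : finFieldType) (n k : nat) (C : {vspace 'rV[F]_n}) : Prop :=
  size (nonzero_weights C) = theta #|F| k.-1.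

From Pilot Require Import Defs.
From HB Require Import structures.
From mathcomp Require Import all_boot all_order all_algebra all_field.
Set Implicit Arguments. Unset Strict Implicit. Unset Printing Implicit Defensive.
Import GRing.Theory.

(* Label the coordinates by field elements, each [c] used [m c] times, and take
   the code spanned by the all-one word and the label word [a].  A codeword
   [x + y a] with [y != 0] vanishes exactly on the coordinates labelled [- x / y],
   so its weight is [n - m (- x / y)], while the nonzero constant words have
   weight [n].  With the multiplicities [1, 2, ..., q] these [q + 1] weights are
   distinct and [n = 1 + 2 + ... + q = q (q + 1) / 2]. *)

Section HammingWeight.

Variables (F : finFieldType) (n : nat).
Local Open Scope ring_scope.

Lemma wt_eq0 (v : 'rV[F]_n) : (wt v == 0%N) = (v == 0).
Proof.
rewrite cards_eq0; apply/eqP/eqP => [/setP v0 | ->].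
  by apply/rowP => i; have := v0 i; rewrite !inE mxE => /negbFE/eqP.
by apply/setP => i; rewrite !inE mxE eqxx.
Qed.

Lemma wtE (v : 'rV[F]_n) :
  wt v = (n - #|[set i | (v 0 i == 0)%R]|)%N.
Proof.
rewrite /wt -[X in (X - _)%N]card_ord -(cardsC [set i | v 0 i == 0]) addKn.
by apply: eq_card => i; rewrite !inE.
Qed.

End HammingWeight.

Section TwoRowCode.

Variables (F : finFieldType) (n : nat) (a : 'I_n -> F).
Local Open Scope ring_scope.

Definition one_row : 'rV[F]_n := const_mx 1.
Definition label_row : 'rV[F]_n := \row_i a i.
Definition two_row_code : {vspace 'rV[F]_n} := <<[:: label_row; one_row]>>%VS.
Definition label_fiber (c : F) : {set 'I_n} := [set i | a i == c].

Lemma two_row_codeP v :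
  reflect (exists x y, v = x *: one_row + y *: label_row) (v \in two_row_code).
Proof.
rewrite /two_row_code span_cons span_seq1; apply: (iffP memv_addP).
  by case=> _ /vlineP[y ->] [_ /vlineP[x ->] ->]; exists x, y; rewrite addrC.
case=> x [y ->]; rewrite addrC; exists (y *: label_row); first by rewrite rpredZ ?memv_line.
by exists (x *: one_row); rewrite ?rpredZ ?memv_line.
Qed.

Lemma two_row_code_coord x y i : (x *: one_row + y *: label_row) 0 i = x + y * a i.
Proof. by rewrite !mxE mulr1. Qed.

Lemma wt_scale_one_row x : x != 0 -> wt (x *: one_row) = n.
Proof.
move=> x_neq0; rewrite wtE -[RHS]subn0; congr (_ - _)%N.
by apply/eqP; rewrite cards_eq0; apply/eqP/setP => i; rewrite !inE !mxE mulr1 (negbTE x_neq0).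
Qed.

Lemma wt_two_row x y : y != 0 ->
  wt (x *: one_row + y *: label_row) = (n - #|label_fiber (- x / y)%R|)%N.
Proof.
move=> y_neq0; rewrite wtE; congr (_ - _)%N; apply: eq_card => i.
rewrite !inE two_row_code_coord addrC addr_eq0.
by rewrite -[in RHS](divr1 (a i)) eqr_div ?oner_neq0 // mulr1 mulrC.
Qed.

Lemma nondegenerate_two_row_code : Defs.nondegenerate two_row_code.
Proof.
move=> i; exists one_row; last by rewrite mxE oner_eq0.
by apply/two_row_codeP; exists 1, 0; rewrite scale1r scale0r addr0.
Qed.

Hypothesis label_nonconst : exists i j, a i != a j.

Lemma dim_two_row_code : \dim two_row_code = 2%N.
Proof.
have [i [j aij]] := label_nonconst.
apply/eqP; rewrite -[2%N]/(size [:: label_row; one_row]) -/(free _).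
rewrite free_cons seq1_free span_seq1; apply/andP; split.
  apply/vlineP => -[k /rowP label_const]; move: aij.
  by have := label_const i; have := label_const j; rewrite !mxE => -> ->; rewrite eqxx.
by apply/eqP => /rowP/(_ i)/eqP; rewrite !mxE oner_eq0.
Qed.

Lemma card_label_fiber_lt c : (#|label_fiber c| < n)%N.
Proof.
have [i [j aij]] := label_nonconst.
rewrite -[n in (_ < n)%N]card_ord; apply/proper_card/properP; split; first exact: subset_predT.
have [aic | aic] := eqVneq (a i) c; last by exists i; rewrite ?inE.
by exists j; rewrite ?inE // -aic eq_sym.
Qed.

Lemma mem_nonzero_weights_two_row_code :
  nonzero_weights two_row_code =i n :: [seq (n - #|label_fiber c|)%N | c <- enum F].
Proof.
have [i _] := label_nonconst; have n_gt0 : (0 < n)%N := leq_ltn_trans (leq0n i) (ltn_ord i).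
move=> w; rewrite mem_undup in_cons; apply/mapP/idP.
  case=> v; rewrite mem_filter mem_enum andbT => /andP[/two_row_codeP[x [y ->]] v_neq0] ->.
  have [y0 | y_neq0] := eqVneq y 0.
    rewrite y0 scale0r addr0 in v_neq0 *; rewrite wt_scale_one_row ?eqxx //.
    by apply: contraNneq v_neq0 => ->; rewrite scale0r.
  by rewrite wt_two_row //; apply/orP; right; apply/mapP; exists (- x / y); rewrite ?mem_enum.
case/orP => [/eqP -> | /mapP[c _ ->]].
  exists (1 *: one_row); last by rewrite wt_scale_one_row ?oner_eq0.
  rewrite mem_filter mem_enum inE andbT -wt_eq0 wt_scale_one_row ?oner_eq0 // -lt0n n_gt0 andbT.
  by apply/two_row_codeP; exists 1, 0; rewrite scale0r addr0.
have wt_c : wt ((- c) *: one_row + 1 *: label_row) = (n - #|label_fiber c|)%N.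
  by rewrite wt_two_row ?oner_eq0 // opprK divr1.
exists ((- c) *: one_row + 1 *: label_row); last by rewrite wt_c.
rewrite mem_filter mem_enum andbT -wt_eq0 wt_c subn_eq0 -ltnNge card_label_fiber_lt andbT.
by apply/two_row_codeP; exists (- c), 1.
Qed.

Lemma size_nonzero_weights_two_row_code :
  (forall c, 0 < #|label_fiber c|)%N -> injective (fun c => #|label_fiber c|) ->
  size (nonzero_weights two_row_code) = #|F|.+1.
Proof.
move=> fiber_gt0 fiber_inj.
have uniq_weights : uniq (n :: [seq (n - #|label_fiber c|)%N | c <- enum F]).
  rewrite /= map_inj_uniq ?enum_uniq ?andbT.
    apply/mapP => -[c _ e]; have := ltn_subrL #|label_fiber c| n.
    rewrite -e ltnn fiber_gt0 /=; have := card_label_fiber_lt c.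
    by move=> /(leq_ltn_trans (leq0n _)) ->.
  move=> c d /= /eqP; rewrite eqn_sub2lE; first by move/eqP; apply: fiber_inj.
    exact: ltnW (card_label_fiber_lt c).
  exact: ltnW (card_label_fiber_lt d).
have := uniq_perm (undup_uniq _) uniq_weights mem_nonzero_weights_two_row_code.
by move/perm_size => ->; rewrite /= size_map -cardE.
Qed.

End TwoRowCode.

Section Multiplicities.

Variables (F : finFieldType) (m : F -> nat).

(* The coordinates of a code whose column [(1, c)] is repeated [m c] times. *)
Definition mult_index := {c : F & 'I_(m c)}.
Definition mult_label (i : 'I_#|{: mult_index}|) : F := tag (enum_val i).

Lemma card_mult_index : #|{: mult_index}| = (\sum_c m c)%N.
Proof.
rewrite card_tagged sumnE big_map -big_enum.
by apply: eq_bigr => c _; rewrite card_ord.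
Qed.

Lemma card_label_fiber_mult c : #|label_fiber mult_label c| = m c.
Proof.
have -> : label_fiber mult_label c = enum_val @^-1: [set t : mult_index | tag t == c].
  by apply/setP => i; rewrite !inE.
rewrite on_card_preimset; last exact/onW_bij/enum_val_bij.
have -> : [set t : mult_index | tag t == c] = [set Tagged (fun c => 'I_(m c)) j | j : 'I_(m c)].
  apply/setP => -[d j]; rewrite inE /=; apply/eqP/imsetP => [dc | [k _ e]].
    by move: j; rewrite dc => j; exists j.
  by case: e.
rewrite card_imset ?card_ord // => j k /eqP.
by rewrite -tag_eqE /tag_eq /= tagged_asE eqxx => /eqP.
Qed.

End Multiplicities.

Lemma sum_enum_rank_succ (T : finType) :
  (\sum_(t : T) (enum_rank t).+1 = (#|T| * (#|T| + 1)) %/ 2)%N.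
Proof.
rewrite (reindex _ (onW_bij _ (enum_val_bij T))) /=.
under eq_bigr => i _ do rewrite enum_valK.
have := bin2_sum #|T|.+1; rewrite big_mkord big_ord_recl /= add0n => ->.
by rewrite bin2 divn2 mulnC addn1.
Qed.

Lemma theta1 (q : nat) : (1 < q)%N -> theta q 1 = q.+1.
Proof. by move=> q_gt1; rewrite /theta -{2}(exp1n 2) subn_sqr mulKn ?addn1 // subn_gt0. Qed.

Lemma pronic_half_ceil (q : nat) : ((q * q.+1 + 1) %/ 2 = (q * q.+1) %/ 2)%N.
Proof. by rewrite !divn2 addn1 -uphalfE uphalf_half oddM /= andbN. Qed.

Theorem mainTheorem12 (F : finFieldType) :
  exists (n : nat) (C : {vspace 'rV[F]_n}),
    [/\ n = (#|F| * (#|F| + 1)) %/ 2,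
        n = (#|F| * theta #|F| 1 + 1) %/ 2,   (* = ceil(q * theta_q(1) / 2) *)
        @is_code F n 2 C
      & @MWS F n 2 C].
Proof.
pose m (c : F) := (enum_rank c).+1; pose a := @mult_label F m.
have fiber_gt0 c : (0 < #|label_fiber a c|)%N by rewrite card_label_fiber_mult.
have fiber_inj : injective (fun c => #|label_fiber a c|).
  by move=> c d /=; rewrite !card_label_fiber_mult => -[/val_inj/enum_rank_inj].
have a_nonconst : exists i j, a i != a j.
  have /card_gt0P[i] := fiber_gt0 0%R; have /card_gt0P[j] := fiber_gt0 1%R.
  by rewrite !inE => /eqP aj /eqP ai; exists i, j; rewrite ai aj eq_sym oner_neq0.
have q_gt1 := card_finNzRing_gt1 F.
have n_eq : #|{: mult_index m}| = (#|F| * (#|F| + 1)) %/ 2.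
  by rewrite card_mult_index sum_enum_rank_succ.
exists _, (two_row_code a); split => //.
- by rewrite n_eq theta1 // pronic_half_ceil addn1.
- by split; [exact: dim_two_row_code | exact: nondegenerate_two_row_code].
- by rewrite /MWS theta1 // size_nonzero_weights_two_row_code.
Qed.
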